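(* Let $l_0\ge4$ be even and $G\in\operatorname{1\text{-}d\text{-}Ring}_{l_0}$. Then along the cycle $\operatorname U(G)$ the vertices alternate between black and white.
   Context: For a finite vertex set $V$ and $N\ge1$, a route through $V$ of length $N$ is a sequence $\mathbf i=(i_1,\dots,i_N)\in V^N$ whose set of entries equals $V$; its circuit multigraph $G_{\mathbf i}$ has vertex set $V$ and edges $1,\dots,N$, edge $k<N$ from $i_k$ to $i_{k+1}$, edge $N$ from $i_N$ to $i_1$; $\mathcal C_{V,N}$ is the set of these. The black vertices are $B(G_{\mathbf i})=\{i_t:t\text{ odd}\}$, the others white. $\operatorname U(G)$ is the simple undirected graph on $V$ having an edge $\{v,w\}$ whenever $G$ has an edge from $v$ to $w$ or from $w$ to $v$ (an undirected connection). A directed multigraph is balanced if its edges split into pairs $(e,e')$ with the head of $e$ the tail of $e'$ and vice versa. For $l_0\ge3$, $G\in\mathcal C_{V,2l_0}$ with $\#V=l_0$ is of ring-type if $\operatorname U(G)$ is a cycle through all $l_0$ vertices and each undirected connection consists of exactly two edges of $G$; $\operatorname{1\text{-}d\text{-}Ring}_{l_0}$ is the set of ring-type graphs with $l_0$ vertices that are not balanced. *)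

From mathcomp Require Import all_boot.
Set Implicit Arguments. Unset Strict Implicit. Unset Printing Implicit Defensive.

(* A route of length N through the finite vertex set V is a map
   i : 'I_N -> V (0-indexed: i k is i_{k+1} of the paper) whose image is all of V. *)
Definition is_route (V : finType) (N : nat) (i : 'I_N -> V) : Prop :=
  forall v : V, exists k : 'I_N, i k = v.

(* Edge k of the circuit multigraph G_i goes from etail i k to ehead i k
   (the last edge goes from i_N back to i_1). *)
Definition etail (V : finType) (N : nat) (i : 'I_N -> V) (k : 'I_N) : V := i k.
Definition ehead (V : finType) (N : nat) (i : 'I_N -> V) (k : 'I_N) : V := i (ordS k).

(* Black vertices: {i_t : t odd} in 1-indexed notation, i.e. positions k even
   in our 0-indexed notation. *)
Definition black (V : finType) (N : nat) (i : 'I_N -> V) (v : V) : bool :=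
  [exists k : 'I_N, ~~ odd k && (i k == v)].

Definition conn_edges (V : finType) (N : nat) (i : 'I_N -> V) (v w : V)
  : {set 'I_N} :=
  [set k : 'I_N | ((etail i k == v) && (ehead i k == w))
                || ((etail i k == w) && (ehead i k == v))].

Definition adjU (V : finType) (N : nat) (i : 'I_N -> V) (v w : V) : bool :=
  (v != w) && (0 < #|conn_edges i v w|).

(* G_i is balanced: the edges split into pairs (e, e') of mutually reverse
   edges; encoded by a fixed-point-free involution on the edge set. *)
Definition balanced (V : finType) (N : nat) (i : 'I_N -> V) : Prop :=
  exists s : 'I_N -> 'I_N,
    forall k : 'I_N,
      [/\ s (s k) = k, s k != k,
          etail i (s k) = ehead i k & ehead i (s k) = etail i k].

Definition U_is_full_cycle (V : finType) (N l0 : nat) (i : 'I_N -> V) : Prop :=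
  exists c : 'I_l0 -> V,
    injective c /\
    forall v w : V,
      adjU i v w <->
      exists j : 'I_l0, (v = c j /\ w = c (ordS j)) \/ (w = c j /\ v = c (ordS j)).

Definition ring_type (V : finType) (l0 : nat) (i : 'I_(2 * l0) -> V) : Prop :=
  [/\ 3 <= l0, #|V| = l0, is_route i, U_is_full_cycle l0 i &
      forall v w : V, adjU i v w -> #|conn_edges i v w| = 2].

Definition one_d_ring (V : finType) (l0 : nat) (i : 'I_(2 * l0) -> V) : Prop :=
  ring_type i /\ ~ balanced i.

From mathcomp Require Import all_boot.

Set Implicit Arguments.
Unset Strict Implicit.
Unset Printing Implicit Defensive.

(* The circuit has 2 l0 edges and each of the l0 edges of the cycle U(G)
   carries exactly two of them; distinct cycle edges share no circuit edge, so
   every step of the circuit runs along the cycle.  An even cycle is bipartite: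
   the parity of the position on the cycle flips at every step of the circuit,
   so it equals the parity of the time up to a constant.  Hence each vertex is
   visited only at even times or only at odd times, and the two ends of a step
   get opposite colours. *)

Lemma ordSS_neq n (j : 'I_n) : 2 < n -> ordS (ordS j) != j.
Proof.
move=> n_gt2; apply/eqP => /(congr1 val) /=; rewrite -addn1 modnDml addn1 => jE.
have : j + 2 == j + 0 %[mod n] by rewrite addn2 jE addn0 modn_small.
by rewrite eqn_modDl mod0n modn_small.
Qed.

Lemma odd_ordS n (j : 'I_n) : ~~ odd n -> odd (ordS j) = ~~ odd j.
Proof.
move=> ev_n /=; case: (ltngtP j.+1 n) (ltn_ord j) => // [lt_jn _ | Sj_n _].
  by rewrite modn_small.
by have /= -> := congr1 odd Sj_n; rewrite Sj_n modnn (negbTE ev_n).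
Qed.

Lemma ordS_alternating n (b : 'I_n -> bool) :
  (forall k, b (ordS k) = ~~ b k) -> forall k k', b k (+) b k' = odd k (+) odd k'.
Proof.
case: n b => [|n] b bS; first by case.
have b0 : forall k : 'I_n.+1, b k = b ord0 (+) odd k.
  case=> k; elim: k => [|k IH] lt_k; first by rewrite addbF; congr b; apply: val_inj.
  have -> : b (Ordinal lt_k) = b (ordS (Ordinal (ltnW lt_k))).
    by congr b; apply: val_inj; rewrite /= modn_small.
  by rewrite bS IH -addbN.
by move=> k k'; rewrite (b0 k) (b0 k') addbACA addbb.
Qed.

Lemma black_alternating (V : finType) N (i : 'I_N -> V) (col : V -> bool) :
  (forall k, col (i (ordS k)) = ~~ col (i k)) -> forall k, black i (i k) = ~~ odd k.
Proof.
move=> colS k; have alt := ordS_alternating (b := col \o i) colS.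
apply/existsP/idP => [[k' /andP[ev_k' /eqP ik']] | ev_k]; last by exists k; rewrite ev_k eqxx.
by move: (alt k k') ev_k'; rewrite /= ik' addbb; case: (odd k); case: (odd k').
Qed.

Lemma bigcup_disjoint_cardT (I T : finType) (F : I -> {set T}) :
  (forall x j j', x \in F j -> x \in F j' -> j = j') ->
  \sum_j #|F j| = #|T| -> \bigcup_j F j = [set: T].
Proof.
move=> F_disj sumF; apply/eqP; rewrite eqEcard subsetT cardsT -sumF.
rewrite -sum1_card partition_disjoint_bigcup.
  by apply: leq_sum => j _; rewrite sum1_card.
move=> j j' neq_jj'; rewrite -setI_eq0.
by apply: contraNT neq_jj' => /set0Pn[x /setIP[xj xj']]; rewrite (F_disj x j j').
Qed.

Section WalkOnCycle.

Variables (V : finType) (l : nat) (c : 'I_l -> V).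
Hypothesis c_inj : injective c.

Definition cycle_parity (v : V) : bool := [exists j, (c j == v) && odd j].

Lemma cycle_parity_c j : cycle_parity (c j) = odd j.
Proof.
apply/existsP/idP => [[j' /andP[/eqP/c_inj -> //]] | odd_j].
by exists j; rewrite eqxx.
Qed.

Variables (N : nat) (i : 'I_N -> V).

Let cycle_edge j := conn_edges i (c j) (c (ordS j)).

Lemma cycle_edge_disjoint k j j' :
  2 < l -> k \in cycle_edge j -> k \in cycle_edge j' -> j = j'.
Proof.
move=> l_gt2; rewrite !inE /etail /ehead.
have ordSS_eq (j1 j2 : 'I_l) : ordS j1 = j2 -> j1 = ordS j2 -> False.
  by move=> <- j1E; move: (ordSS_neq j1 l_gt2); rewrite -j1E eqxx.
case/orP=> /andP[/eqP-> /eqP->] /orP[]/andP[/eqP/c_inj e1 /eqP/c_inj e2] //.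
all: by exfalso; apply: (ordSS_eq j j').
Qed.

Lemma walk_on_cycle :
  2 < l -> N = 2 * l -> (forall j, #|cycle_edge j| = 2) ->
  forall k, exists j, k \in cycle_edge j.
Proof.
move=> l_gt2 NE two k.
have cover_all : \bigcup_j cycle_edge j = [set: 'I_N].
  apply: bigcup_disjoint_cardT => [x j j'|]; first exact: cycle_edge_disjoint l_gt2.
  rewrite (eq_bigr (fun=> 2)) => [|j _]; last exact: two.
  by rewrite sum_nat_const !card_ord NE mulnC.
by have /bigcupP[j _ kj] : k \in \bigcup_j cycle_edge j; [rewrite cover_all inE | exists j].
Qed.

Lemma cycle_parity_flips :
  ~~ odd l -> (forall k, exists j, k \in cycle_edge j) ->
  forall k, cycle_parity (i (ordS k)) = ~~ cycle_parity (i k).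
Proof.
move=> ev_l on_cycle k; have [j] := on_cycle k.
rewrite inE /etail /ehead => /orP[]/andP[/eqP-> /eqP->];
  by rewrite !cycle_parity_c odd_ordS ?negbK.
Qed.

End WalkOnCycle.

Theorem lemma4p7 (V : finType) (l0 : nat) (i : 'I_(2 * l0) -> V) :
  4 <= l0 -> ~~ odd l0 -> one_d_ring i ->
  forall v w : V, adjU i v w -> black i v != black i w.
Proof.
move=> _ ev_l0 [[l0_gt2 _ _ [c [c_inj c_adj]] two] _] v w /andP[_].
have mult j : #|conn_edges i (c j) (c (ordS j))| = 2.
  by apply: two; apply/c_adj; exists j; left.
have on_cycle := walk_on_cycle c_inj l0_gt2 erefl mult.
have blackE := black_alternating (cycle_parity_flips c_inj ev_l0 on_cycle).
have ev_N : ~~ odd (2 * l0) by rewrite oddM.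
rewrite card_gt0 => /set0Pn[k]; rewrite inE /etail /ehead.
by case/orP=> /andP[/eqP<- /eqP<-]; rewrite !blackE odd_ordS //; case: (odd k).
Qed.
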